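(* For every $d\ge 2$ there is a family $\mathcal{F}$ of $2^d+d$ hyperplanes in $\mathbb{R}^d$ in general position that is not in convex position. Specifically, such a family can be obtained by taking hyperplanes $h_1,\ldots,h_d$ sufficiently close to the coordinate hyperplanes $\{x_i=0\}$ and, for each $\delta=(\delta_1,\ldots,\delta_d)\in\{1,-1\}^d$, a hyperplane $h_\delta$ sufficiently close to $\{x:\sum_{i=1}^d\delta_ix_i=1\}$, chosen so that the family is in general position.
   Context: A set of $n\ge d$ hyperplanes in $\mathbb{R}^d$ is in general position if every $d$ of them intersect in a single point and these $\binom nd$ points are pairwise distinct. A set $\{U_1,\ldots,U_n\}$ of hyperplanes is in convex position if there is a $d$-dimensional convex polytope $P\subset\mathbb{R}^d$ such that $U_i\cap P$ is a $(d-1)$-dimensional face (facet) of $P$ for every $i$. *)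

From HB Require Import structures.
From mathcomp Require Import all_boot all_order all_algebra.
From mathcomp Require Import reals.
Set Implicit Arguments. Unset Strict Implicit. Unset Printing Implicit Defensive.
Import Order.TTheory GRing.Theory Num.Theory.
Local Open Scope ring_scope.

Section Defs.
Variables (R : realType) (d : nat).
Notation pt := 'rV[R]_d.

Definition dot (a x : pt) : R := \sum_(j < d) a 0 j * x 0 j.

Definition hyp (a : pt) (b : R) : pt -> Prop := fun x => dot a x = b.

(* Points p_0,...,p_{m-1} are affinely independent:
   the m x (d+1) matrix with rows [p_i | 1] has full row rank. *)
Definition aff_indep (m : nat) (p : 'I_m -> pt) : bool :=
  row_free (row_mx (\matrix_(i < m, j < d) p i 0 j) (const_mx 1 : 'M[R]_(m, 1))).

(* S contains m affinely independent points
   (i.e. the affine hull of S has dimension >= m - 1). *)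
Definition has_aff_indep (S : pt -> Prop) (m : nat) : Prop :=
  exists p : 'I_m -> pt, (forall i, S (p i)) /\ aff_indep p.

Definition conv (k : nat) (v : 'I_k -> pt) : pt -> Prop :=
  fun x => exists l : 'I_k -> R,
    (forall j, 0 <= l j) /\ \sum_(j < k) l j = 1 /\ x = \sum_(j < k) l j *: v j.

Definition face (P F : pt -> Prop) : Prop :=
  exists (a : pt) (b : R), a != 0 /\ (forall x, P x -> dot a x <= b) /\
    (forall x, F x <-> (P x /\ dot a x = b)).

(* Facet: a face of dimension exactly d-1 (its affine hull has dimension d-1). *)
Definition facet (P F : pt -> Prop) : Prop :=
  face P F /\ has_aff_indep F d /\ ~ has_aff_indep F d.+1.

Definition general_position (I : finType) (a : I -> pt) (b : I -> R) : Prop :=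
  (d <= #|I|)%N /\
  (forall i, a i != 0) /\
  (forall S : {set I}, #|S| = d ->
     exists x, forall y, (forall i, i \in S -> hyp (a i) (b i) y) <-> y = x) /\
  (forall S T : {set I}, #|S| = d -> #|T| = d -> S != T ->
     forall x, (forall i, i \in S -> hyp (a i) (b i) x) ->
               ~ (forall i, i \in T -> hyp (a i) (b i) x)).

Definition convex_position (I : finType) (a : I -> pt) (b : I -> R) : Prop :=
  exists (k : nat) (v : 'I_k -> pt),
    has_aff_indep (conv v) d.+1 /\
    forall i, facet (conv v) (fun x => hyp (a i) (b i) x /\ conv v x).

End Defs.

Definition sgnb (R : realType) (s : bool) : R := if s then 1 else -1.

From HB Require Import structures.
From mathcomp Require Import all_boot all_order all_algebra.
From mathcomp Require Import reals boolp.
From mathcomp Require Import ring lra.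
Import Order.TTheory GRing.Theory Num.Theory.
Local Open Scope ring_scope.
Set Implicit Arguments. Unset Strict Implicit. Unset Printing Implicit Defensive.

(* Suppose hyperplanes h_1..h_d close to the coordinate
   hyperplanes {x_i = 0}, and h_s close to {sum_j s_j x_j = 1} for every sign
   vector s, are facet hyperplanes of a polytope P.  A hyperplane cutting a
   face out of P supports P, so P lies on one side of each h_i, which yields
   signs s_i with s_i x_i <~ 0 on P.  The facet of h_s contains a point x of
   P with sum_j s_j x_j ~ 1; summing the coordinate estimates, with errors
   controlled by the l^1 norm of x, gives a contradiction
   (lemma nearly_standard_not_convex).

   Perturb the model family along the moment curve: hyperplane k
   gets normal a_k + eps (1, t_k, ..., t_k^(d-1)) and offset b_k + eps t_k^d
   with distinct t_k.  General position amounts to the invertibility of every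
   d x d matrix of normals and every (d+1) x (d+1) augmented matrix
   (general_position_criterion); each such determinant is a polynomial in eps
   which is nonzero because the moment (Vandermonde) matrices are invertible,
   so a small eps avoiding all their roots works (generic_perturbation). *)

Section Polytopes.
Variables (R : realType) (d : nat).
Local Notation pt := 'rV[R]_d.

Lemma dot_segment (a x y : pt) t :
  dot a (t *: x + (1 - t) *: y) = t * dot a x + (1 - t) * dot a y.
Proof.
rewrite /dot 2!mulr_sumr -big_split /=.
by apply: eq_bigr => j _; rewrite !mxE; ring.
Qed.

Lemma dotBl (a c x : pt) : dot (a - c) x = dot a x - dot c x.
Proof. by rewrite /dot -sumrB; apply: eq_bigr => j _; rewrite !mxE mulrBl. Qed.

Lemma conv_segment k (v : 'I_k -> pt) x y t :
  conv v x -> conv v y -> 0 <= t <= 1 -> conv v (t *: x + (1 - t) *: y).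
Proof.
move=> [l [l_ge0 [l_sum ->]]] [m [m_ge0 [m_sum ->]]] /andP [t_ge0 t_le1].
exists (fun j => t * l j + (1 - t) * m j); split; [|split].
- by move=> j; rewrite addr_ge0 // mulr_ge0 // subr_ge0.
- by rewrite big_split /= -!mulr_sumr l_sum m_sum; ring.
- rewrite !scaler_sumr -big_split /=.
  by apply: eq_bigr => j _; rewrite [RHS]scalerDl !scalerA.
Qed.

(* If a hyperplane cuts a face out of a polytope, the polytope cannot have
   points strictly on both of its sides: the segment joining two such points
   crosses the hyperplane inside the face, so the functional defining the
   face attains its maximum at an interior point of the segment, hence at
   both endpoints, which forces both endpoints into the face. *)
Lemma face_hyperplane_no_crossing k (v : 'I_k -> pt) (a : pt) (b : R) x y :
  face (conv v) (fun z => hyp a b z /\ conv v z) ->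
  conv v x -> conv v y -> b < dot a x -> dot a y < b -> False.
Proof.
move=> [a' [b' [_ [supp face_eq]]]] Px Py ax_gt ay_lt.
pose t := (b - dot a y) / (dot a x - dot a y).
have gap : 0 < dot a x - dot a y by lra.
have t_def : t * (dot a x - dot a y) = b - dot a y by rewrite /t divfK ?gt_eqF.
have t_gt0 : 0 < t by rewrite /t divr_gt0 // subr_gt0.
have t_lt1 : t < 1 by rewrite /t ltr_pdivrMr // mul1r; lra.
pose z := t *: x + (1 - t) *: y.
have Pz : conv v z by apply: conv_segment => //; rewrite !ltW.
have z_on_h : hyp a b z by rewrite /hyp dot_segment; nra.
have [_ a'z] := proj1 (face_eq z) (conj z_on_h Pz).
have a'x : dot a' x = b'.
  move: a'z; rewrite dot_segment => a'z.
  have := supp x Px; have := supp y Py; nra.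
have [x_on_h _] := proj2 (face_eq x) (conj Px a'x).
by move: ax_gt; rewrite x_on_h ltxx.
Qed.

Lemma face_hyperplane_supports k (v : 'I_k -> pt) (a : pt) (b : R) :
  face (conv v) (fun z => hyp a b z /\ conv v z) ->
  (forall x, conv v x -> dot a x <= b) \/ (forall x, conv v x -> b <= dot a x).
Proof.
move=> Hface.
case: (pselect (exists y, conv v y /\ dot a y < b)) => [[y [Py ay_lt]]|no_below].
- left => x Px; rewrite leNgt; apply/negP => ax_gt.
  exact: (face_hyperplane_no_crossing Hface Px Py ax_gt ay_lt).
- right => x Px; rewrite leNgt; apply/negP => ax_lt.
  by apply: no_below; exists x.
Qed.

End Polytopes.

Section NearlyStandardFamily.
Variables (R : realType) (d : nat).
Local Notation pt := 'rV[R]_d.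

Definition norm1 (x : pt) : R := \sum_(j < d) `|x 0 j|.

Lemma norm1_ge0 (x : pt) : 0 <= norm1 x.
Proof. exact: sumr_ge0. Qed.

Lemma dot_small (c x : pt) (e : R) :
  (forall j, `|c 0 j| < e) -> `|dot c x| <= e * norm1 x.
Proof.
move=> c_small; rewrite /dot /norm1 mulr_sumr.
apply: le_trans (ler_norm_sum _ _ _) _; apply: ler_sum => j _.
by rewrite normrM ler_wpM2r // ltW.
Qed.

Lemma affine_form_near (a c x : pt) (b b0 e : R) :
  `|b - b0| < e -> (forall j, `|a 0 j - c 0 j| < e) ->
  `|(dot a x - b) - (dot c x - b0)| <= e * (1 + norm1 x).
Proof.
move=> b_near a_near.
have -> : (dot a x - b) - (dot c x - b0) = dot (a - c) x - (b - b0).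
  by rewrite dotBl; ring.
apply: le_trans (ler_normB _ _) _; rewrite mulrDr mulr1 [e + _]addrC.
apply: lerD; last exact: ltW.
by apply: dot_small => j; rewrite !mxE.
Qed.

Definition unit_row (j : 'I_d) : pt := \row_l (j == l)%:R.
Definition sign_row (s : {ffun 'I_d -> bool}) : pt := \row_l sgnb R (s l).

Lemma dot_unit_row j (x : pt) : dot (unit_row j) x = x 0 j.
Proof.
rewrite /dot (bigD1 j) //= big1 => [|l /negbTE l_neq]; rewrite mxE.
  by rewrite eqxx mul1r addr0.
by rewrite eq_sym l_neq mul0r.
Qed.

Lemma dot_sign_row s (x : pt) :
  dot (sign_row s) x = \sum_(j < d) sgnb R (s j) * x 0 j.
Proof. by apply: eq_bigr => j _; rewrite mxE. Qed.

Lemma abs_add_signed (s : bool) (t K : R) :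
  0 <= K -> sgnb R s * t <= K -> `|t| + sgnb R s * t <= 2 * K.
Proof.
rewrite /sgnb => K_ge0; case: s; case: (lerP 0 t) => t_sgn;
  rewrite ?(ger0_norm t_sgn) ?(ltr0_norm t_sgn); lra.
Qed.

Definition near_eps : R := (2 * d.+1)%:R^-1.

Lemma near_eps_gt0 : 0 < near_eps.
Proof. by rewrite invr_gt0 ltr0n. Qed.

Lemma near_eps_lt1 : near_eps < 1.
Proof. by rewrite invf_lt1 ?ltr0n // ltr1n mul2n doubleS. Qed.

Lemma near_eps_small : (2 * d%:R + 1) * near_eps < 1.
Proof.
have -> : (2 * d%:R + 1 : R) = (2 * d.+1)%:R - 1 by rewrite natrM -nat1r; ring.
by rewrite mulrBl mulfV ?pnatr_eq0 // mul1r gtrBl near_eps_gt0.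
Qed.

(* Each h_i supports the
   polytope P, which fixes signs s_i with s_i x_i <~ 0 on P; but the facet of
   h_s contains a point x of P with sum_j s_j x_j ~ 1. *)
Lemma nearly_standard_not_convex (I : finType) (a : I -> pt) (b : I -> R)
    (f : 'I_d -> I) (g : {ffun 'I_d -> bool} -> I) :
  (0 < d)%N ->
  (forall i, `|b (f i)| < near_eps /\
     forall j, `|a (f i) 0 j - (i == j)%:R| < near_eps) ->
  (forall s, `|b (g s) - 1| < near_eps /\
     forall j, `|a (g s) 0 j - sgnb R (s j)| < near_eps) ->
  ~ convex_position a b.
Proof.
move=> d_gt0 f_near g_near [k [v [_ facets]]].
set e := near_eps; pose P := conv v.
pose s := [ffun i => `[< forall x, P x -> dot (a (f i)) x <= b (f i) >]].
have [_ [[p [p_in _]] _]] := facets (g s).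
have [x_hyp Px] := p_in (Ordinal d_gt0); set x := p _ in x_hyp Px.
set N := norm1 x; set S := \sum_(j < d) sgnb R (s j) * x 0 j.
have K_ge0 : 0 <= e * (1 + N).
  by rewrite mulr_ge0 ?addr_ge0 ?norm1_ge0 // ltW ?near_eps_gt0.
have coord_bound j : sgnb R (s j) * x 0 j <= e * (1 + N).
  have [b_near a_near] := f_near j.
  have := @affine_form_near (a (f j)) (unit_row j) x (b (f j)) 0 e.
  rewrite !subr0 dot_unit_row => /(_ b_near) near.
  have /ler_normlP [lo hi] : `|dot (a (f j)) x - b (f j) - x 0 j| <= e * (1 + N).
    by apply: near => l; rewrite !mxE.
  rewrite /sgnb ffunE; case: asboolP => [below|not_below].
    by have := below x Px; lra.
  have [below|above] := face_hyperplane_supports (proj1 (facets (f j))).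
    by case: not_below.
  by have := above x Px; lra.
have sum_bound : N + S <= d%:R * (2 * (e * (1 + N))).
  have -> : N + S = \sum_(j < d) (`|x 0 j| + sgnb R (s j) * x 0 j).
    by rewrite big_split.
  apply: (@le_trans _ _ (\sum_(j < d) 2 * (e * (1 + N)))).
    by apply: ler_sum => j _; exact: abs_add_signed.
  by rewrite sumr_const card_ord [leRHS]mulr_natl.
have facet_bound : 1 - e * (1 + N) <= S.
  have [b_near a_near] := g_near s.
  have := @affine_form_near (a (g s)) (sign_row s) x (b (g s)) 1 e.
  rewrite dot_sign_row -/S (x_hyp : dot _ x = _) subrr => /(_ b_near) near.
  have /ler_normlP [_ hi] : `|0 - (S - 1)| <= e * (1 + N).
    by apply: near => j; rewrite mxE.
  lra.
have e_small : (2 * d%:R + 1) * e < 1 := near_eps_small.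
have N_ge0 : 0 <= N := norm1_ge0 x.
nra.
Qed.

End NearlyStandardFamily.

Section DeterminantPencil.
Variable R : fieldType.

(* For B invertible, det (A + x B) is a nonzero polynomial function of x:
   it equals det B * char_poly (- B^-1 A) evaluated at x. *)
Definition pencil_poly m (A B : 'M[R]_m) : {poly R} :=
  (\det B)%:P * char_poly (- (invmx B *m A)).

Lemma horner_char_poly m (M : 'M[R]_m) x : (char_poly M).[x] = \det (x%:M - M).
Proof.
rewrite /char_poly -[(\det _).[x]]/(horner_eval x (\det _)) -det_map_mx.
congr (\det _); apply/matrixP => i j; rewrite !mxE.
by rewrite -[LHS]/(('X *+ (i == j) - (M i j)%:P).[x]) hornerD hornerN hornerMn hornerX hornerC.
Qed.

Lemma pencil_poly_neq0 m (A B : 'M[R]_m) : B \in unitmx -> pencil_poly A B != 0.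
Proof.
move=> B_unit; rewrite mulf_neq0 //; last exact/monic_neq0/char_poly_monic.
by rewrite polyC_eq0 -unitfE -unitmxE.
Qed.

Lemma horner_pencil_poly m (A B : 'M[R]_m) x :
  B \in unitmx -> (pencil_poly A B).[x] = \det (A + x *: B).
Proof.
move=> B_unit; rewrite hornerM hornerC horner_char_poly -det_mulmx.
by rewrite opprK mulmxDr mul_mx_scalar mulKVmx // addrC.
Qed.

End DeterminantPencil.

(* A nonzero polynomial over an ordered field has a non-root in every
   interval ]0, c[: the points c / 2, c / 3, ... cannot all be roots. *)
Lemma nonroot_in_interval (R : realFieldType) (p : {poly R}) (c : R) :
  p != 0 -> 0 < c -> exists x, [/\ 0 < x, x < c & ~~ root p x].
Proof.
move=> p_neq0 c_gt0.
pose pts := [seq c / (i.+2)%:R | i <- iota 0 (size p)].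
have pts_uniq : uniq pts.
  rewrite map_inj_uniq ?iota_uniq // => i j /(mulfI (lt0r_neq0 c_gt0)) /invr_inj.
  by move/eqP; rewrite eqr_nat => /eqP [].
have : ~~ all (root p) pts.
  apply/negP => all_roots; have := max_poly_roots p_neq0 all_roots pts_uniq.
  by rewrite size_map size_iota ltnn.
rewrite -has_predC => /hasP [_ /mapP [i _ ->] /= not_root].
exists (c / (i.+2)%:R); split => //; first by rewrite divr_gt0 ?ltr0n.
by rewrite ltr_pdivrMr ?ltr0n // ltr_pMr // ltr1n.
Qed.

Section GeneralPositionCriterion.
Variables (R : realType) (d : nat) (I : finType).
Variables (a : I -> 'rV[R]_d) (b : I -> R).

Definition normal_mx m (e : 'I_m -> I) : 'M[R]_(m, d) := \matrix_(r, j) a (e r) 0 j.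
Definition aug_mx m (e : 'I_m -> I) : 'M[R]_(m, d + 1) :=
  row_mx (normal_mx e) (\col_r b (e r)).

Lemma normal_mx_dot m (e : 'I_m -> I) (y : 'rV[R]_d) r :
  (normal_mx e *m y^T) r 0 = dot (a (e r)) y.
Proof. by rewrite !mxE; apply: eq_bigr => j _; rewrite !mxE. Qed.

Lemma unique_common_point (e : 'I_d -> I) : normal_mx e \in unitmx ->
  exists x, forall y, (forall r, hyp (a (e r)) (b (e r)) y) <-> y = x.
Proof.
move=> M_unit; pose rhs : 'cV_d := \col_r b (e r).
exists (invmx (normal_mx e) *m rhs)^T => y; split => [on_all|->] .
- have My : normal_mx e *m y^T = rhs.
    by apply/matrixP => r c; rewrite ord1 normal_mx_dot mxE; exact: on_all.
  by rewrite -My mulKmx // trmxK.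
- by move=> r; rewrite /hyp -normal_mx_dot trmxK mulKVmx // mxE.
Qed.

(* d + 1 hyperplanes through a common point x have a singular augmented
   matrix: it kills the nonzero vector (x, -1). *)
Lemma common_point_aug_singular (e : 'I_(d + 1) -> I) x :
  (forall r, hyp (a (e r)) (b (e r)) x) -> aug_mx e \notin unitmx.
Proof.
move=> on_all; apply/negP => W_unit.
pose w : 'cV[R]_(d + 1) := col_mx x^T (const_mx (-1)).
have Ww : aug_mx e *m w = 0.
  apply/matrixP => r c; rewrite ord1 mul_row_col mxE normal_mx_dot mxE.
  by rewrite big_ord1 !mxE on_all mulrN1 subrr.
have : w = 0 by rewrite -(mulKmx W_unit w) Ww mulmx0.
move/(congr1 (fun M : 'cV[R]_(d + 1) => M (rshift d ord0) ord0)).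
by rewrite col_mxEd !mxE => /eqP; rewrite oppr_eq0 oner_eq0.
Qed.

Definition enum_set (S : {set I}) m (HS : #|S| = m) (r : 'I_m) : I :=
  enum_val (cast_ord (esym HS) r).

Lemma enum_set_inj (S : {set I}) m (HS : #|S| = m) : injective (enum_set HS).
Proof. by move=> r r' /enum_val_inj /cast_ord_inj. Qed.

Lemma enum_setP (S : {set I}) m (HS : #|S| = m) i :
  (i \in S) <-> exists r, enum_set HS r = i.
Proof.
split => [i_in|[r <-]]; last exact: enum_valP.
exists (cast_ord HS (enum_rank_in i_in i)).
by rewrite /enum_set cast_ordK enum_rankK_in.
Qed.

Lemma general_position_criterion :
  (d <= #|I|)%N -> (forall i, a i != 0) ->
  (forall e : 'I_d -> I, injective e -> normal_mx e \in unitmx) ->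
  (forall e : 'I_(d + 1) -> I, injective e -> aug_mx e \in unitmx) ->
  general_position a b.
Proof.
move=> card_I a_neq0 normal_unit aug_unit; split; [done|split; [done|split]].
- move=> S HS; have [x x_unique] :=
    unique_common_point (normal_unit _ (@enum_set_inj _ _ HS)).
  exists x => y; rewrite -x_unique; split => [on_S r|on_all i /(enum_setP HS) [r <-]].
    by apply/on_S/(enum_setP HS); exists r.
  exact: on_all.
- move=> S T HS HT S_neq_T x on_S on_T.
  have [t t_in_T t_notin_S] : exists2 t, t \in T & t \notin S.
    apply/subsetPn/negP => T_sub_S.
    by move: S_neq_T; rewrite eq_sym eqEcard T_sub_S HS HT leqnn.
  have HU : #|t |: S| = (d + 1)%N by rewrite cardsU1 t_notin_S HS addnC.
  apply/negP: (aug_unit _ (@enum_set_inj _ _ HU)).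
  apply: common_point_aug_singular => r.
  have : enum_set HU r \in t |: S by apply/(enum_setP HU); exists r.
  by rewrite in_setU1 => /orP [/eqP ->|]; [exact: on_T | exact: on_S].
Qed.

End GeneralPositionCriterion.

Section Construction.
Variables (R : realType) (d : nat).
Local Notation n := (2 ^ d + d)%N.
Local Notation label_type := ('I_d + {ffun 'I_d -> bool})%type.

(* The 2^d + d hyperplanes are indexed by 'I_n; each index carries a label:
   a coordinate i or a sign vector s. *)
Lemma card_label : n = #|{: label_type}|.
Proof. by rewrite card_sum card_ffun card_bool !card_ord addnC. Qed.

Definition label (k : 'I_n) : label_type := enum_val (cast_ord card_label k).
Definition label_index (y : label_type) : 'I_n :=
  cast_ord (esym card_label) (enum_rank y).

Lemma label_indexK y : label (label_index y) = y.
Proof. by rewrite /label /label_index cast_ordKV enum_rankK. Qed.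

Definition model_normal (k : 'I_n) : 'rV[R]_d :=
  match label k with inl i => unit_row R i | inr s => sign_row R s end.
Definition model_offset (k : 'I_n) : R := if label k is inl _ then 0 else 1.

(* Distinct parameters on the moment curve t |-> (1, t, ..., t^d). *)
Definition moment (k : 'I_n) : R := k%:R / n%:R.

Lemma moment_ge0 k : 0 <= moment k.
Proof. by rewrite divr_ge0 ?ler0n. Qed.

Lemma moment_le1 k : moment k <= 1.
Proof.
rewrite ler_pdivrMr ?mul1r ?ler_nat ?(ltnW (ltn_ord k)) //.
by rewrite ltr0n addn_gt0 expn_gt0.
Qed.

Lemma moment_inj : injective moment.
Proof.
have n_neq0 : (n%:R : R) != 0 by rewrite pnatr_eq0 addn_eq0 expn_eq0.
move=> k k' /(mulIf (invr_neq0 n_neq0)) /eqP; rewrite eqr_nat => /eqP.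
exact: ord_inj.
Qed.

Definition moment_mx m (e : 'I_m -> 'I_n) : 'M[R]_m := \matrix_(r, j) moment (e r) ^+ j.

Lemma moment_mx_unit m (e : 'I_m -> 'I_n) : injective e -> moment_mx e \in unitmx.
Proof.
move=> e_inj; rewrite unitmxE unitfE.
have -> : moment_mx e = (Vandermonde m (\row_r moment (e r)))^T.
  by apply/matrixP => i j; rewrite !mxE.
rewrite det_tr det_Vandermonde; apply/prodf_neq0 => i _; apply/prodf_neq0 => j ij.
rewrite !mxE subr_eq0; apply/eqP => /moment_inj /e_inj eq_ji.
by move: ij; rewrite eq_ji ltnn.
Qed.

Definition pnormal (eps : R) (k : 'I_n) : 'rV[R]_d :=
  model_normal k + eps *: \row_j moment k ^+ j.
Definition poffset (eps : R) (k : 'I_n) : R := model_offset k + eps * moment k ^+ d.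

Lemma normal_mx_pnormal eps (e : 'I_d -> 'I_n) :
  normal_mx (pnormal eps) e = normal_mx model_normal e + eps *: moment_mx e.
Proof. by apply/matrixP => r j; rewrite !mxE. Qed.

Lemma aug_mx_pnormal eps (e : 'I_(d + 1) -> 'I_n) :
  aug_mx (pnormal eps) (poffset eps) e =
  aug_mx model_normal model_offset e + eps *: moment_mx e.
Proof.
apply/matrixP => r j; rewrite !mxE; case: splitP => j' ->; rewrite !mxE //.
by rewrite ord1 addn0.
Qed.

(* The determinants of all the relevant matrices of the perturbed family are
   nonzero polynomials in eps; their product vanishes at finitely many eps. *)
Definition genericity_poly : {poly R} :=
  (\prod_(e : {ffun 'I_(d + 1) -> 'I_n} | injectiveb e)
     pencil_poly (aug_mx model_normal model_offset e) (moment_mx e)) *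
  (\prod_(e : {ffun 'I_d -> 'I_n} | injectiveb e)
     pencil_poly (normal_mx model_normal e) (moment_mx e)).

Lemma genericity_poly_neq0 : genericity_poly != 0.
Proof.
by rewrite mulf_neq0 //; apply/prodf_neq0 => e /injectiveP e_inj;
  apply/pencil_poly_neq0/moment_mx_unit.
Qed.

Lemma finfun_injective m (e : 'I_m -> 'I_n) :
  injective e -> injectiveb [ffun r => e r].
Proof. by move=> e_inj; apply/injectiveP => r r'; rewrite !ffunE => /e_inj. Qed.

Lemma fun_of_finfun m (e : 'I_m -> 'I_n) : fun_of_fin [ffun r => e r] = e.
Proof. by apply/funext => r; rewrite ffunE. Qed.

Lemma generic_perturbation (c : R) : 0 < c -> exists eps, [/\ 0 < eps, eps < c,
  forall e : 'I_(d + 1) -> 'I_n, injective e ->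
    aug_mx (pnormal eps) (poffset eps) e \in unitmx &
  forall e : 'I_d -> 'I_n, injective e -> normal_mx (pnormal eps) e \in unitmx].
Proof.
move=> c_gt0; have [eps [eps_gt0 eps_lt]] :=
  nonroot_in_interval genericity_poly_neq0 c_gt0.
rewrite /root hornerM mulf_eq0 negb_or !horner_prod.
move=> /andP [/prodf_neq0 aug_det /prodf_neq0 normal_det].
exists eps; split => // e e_inj.
- have := aug_det _ (finfun_injective e_inj).
  by rewrite horner_pencil_poly ?moment_mx_unit ?fun_of_finfun // -aug_mx_pnormal
    unitmxE unitfE.
- have := normal_det _ (finfun_injective e_inj).
  by rewrite horner_pencil_poly ?moment_mx_unit ?fun_of_finfun // -normal_mx_pnormal
    unitmxE unitfE.
Qed.

(* For 0 < eps < 1 all perturbed normals are nonzero: their first coordinate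
   is eps plus 0 or +-1. *)
Lemma pnormal_neq0 eps k : (0 < d)%N -> 0 < eps < 1 -> pnormal eps k != 0.
Proof.
move=> d_gt0 /andP [eps_gt0 eps_lt1]; apply/eqP => /rowP /(_ (Ordinal d_gt0)).
rewrite /pnormal /model_normal !mxE expr0 mulr1.
case: (label k) => [i|s]; rewrite !mxE /sgnb;
  [case: (_ == _) | case: (s _)]; rewrite /=; lra.
Qed.

Lemma perturbation_small eps k j : 0 < eps -> `|eps * moment k ^+ j| <= eps.
Proof.
move=> eps_gt0; rewrite normrM gtr0_norm // ger0_norm ?exprn_ge0 ?moment_ge0 //.
by apply: ler_piMr; [exact: ltW | exact: exprn_ile1 (moment_ge0 k) (moment_le1 k)].
Qed.

Lemma pnormal_near eps c k j : 0 < eps -> eps < c ->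
  `|pnormal eps k 0 j - model_normal k 0 j| < c.
Proof.
move=> eps_gt0; apply: le_lt_trans.
by rewrite /pnormal !mxE addrAC subrr add0r perturbation_small.
Qed.

Lemma poffset_near eps c k : 0 < eps -> eps < c ->
  `|poffset eps k - model_offset k| < c.
Proof.
move=> eps_gt0; apply: le_lt_trans.
by rewrite /poffset addrAC subrr add0r perturbation_small.
Qed.

Lemma coordinate_hyperplane_near eps c i : 0 < eps -> eps < c ->
  `|poffset eps (label_index (inl i))| < c /\
  forall j, `|pnormal eps (label_index (inl i)) 0 j - (i == j)%:R| < c.
Proof.
move=> eps_gt0 eps_lt; split => [|j].
  by have := poffset_near (label_index (inl i)) eps_gt0 eps_lt;
    rewrite /model_offset label_indexK subr0.
have -> : (i == j)%:R = model_normal (label_index (inl i)) 0 j.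
  by rewrite /model_normal label_indexK mxE.
exact: pnormal_near.
Qed.

Lemma sign_hyperplane_near eps c s : 0 < eps -> eps < c ->
  `|poffset eps (label_index (inr s)) - 1| < c /\
  forall j, `|pnormal eps (label_index (inr s)) 0 j - sgnb R (s j)| < c.
Proof.
move=> eps_gt0 eps_lt; split => [|j].
  by have := poffset_near (label_index (inr s)) eps_gt0 eps_lt;
    rewrite /model_offset label_indexK.
have -> : sgnb R (s j) = model_normal (label_index (inr s)) 0 j.
  by rewrite /model_normal label_indexK mxE.
exact: pnormal_near.
Qed.

End Construction.

Theorem mainTheorem11 (R : realType) (d : nat) (hd : (2 <= d)%N) :
  (* a family of 2^d + d hyperplanes in general position, not in convex position *)
  (exists (a : 'I_(2 ^ d + d) -> 'rV[R]_d) (b : 'I_(2 ^ d + d) -> R),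
      general_position a b /\ ~ convex_position a b)
  /\
  (* the construction: h_i close to {x_i = 0}, h_delta close to {sum delta_i x_i = 1} *)
  (exists eps : R, 0 < eps /\
    forall (a : 'I_d + {ffun 'I_d -> bool} -> 'rV[R]_d)
           (b : 'I_d + {ffun 'I_d -> bool} -> R),
      (forall i : 'I_d, `|b (inl i)| < eps /\
         forall j : 'I_d, `|a (inl i) 0 j - (i == j)%:R| < eps) ->
      (forall delta : {ffun 'I_d -> bool}, `|b (inr delta) - 1| < eps /\
         forall j : 'I_d, `|a (inr delta) 0 j - sgnb R (delta j)| < eps) ->
      general_position a b -> ~ convex_position a b).
Proof.
have d_gt0 : (0 < d)%N by apply: leq_trans hd.
split; last first.
  exists (near_eps R d); split; first exact: near_eps_gt0.
  move=> a b coord_near sign_near _.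
  exact: (nearly_standard_not_convex (f := inl) (g := inr)).
have [eps [eps_gt0 eps_lt aug_unit normal_unit]] :=
  generic_perturbation d (near_eps_gt0 R d).
exists (pnormal eps), (poffset eps); split.
  apply: general_position_criterion => //; first by rewrite card_ord leq_addl.
  by move=> k; rewrite pnormal_neq0 // eps_gt0 (lt_trans eps_lt) ?near_eps_lt1.
apply: (nearly_standard_not_convex (f := fun i => label_index (inl i))
                                   (g := fun s => label_index (inr s))) => //.
- by move=> i; exact: coordinate_hyperplane_near.
- by move=> s; exact: sign_hyperplane_near.
Qed.
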